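(* Let $A$ be a finitely generated algebra over $B=\bigoplus_{s=1}^K\Bbbk e_s$, $\alpha\in\mathbb N^K$, $N=\sum_s\alpha_s$, $R=\mathcal O(\operatorname{Rep}(A,\alpha))$, and $Q\in(D_BA)_3$ with associated differential triple bracket $\{\!\{-,-,-\}\!\}_Q$. Then for all $a,b,c\in A$ and $1\le i,j,k,l,u,v\le N$, $$\operatorname{tr}\mathcal X(Q)(a_{ij},b_{kl},c_{uv})=(\{\!\{a,b,c\}\!\}_Q)_{uj,il,kv}-(\{\!\{a,c,b\}\!\}_Q)_{kj,iv,ul},$$ where for $x=x'\otimes x''\otimes x'''\in A^{\otimes3}$ we write $x_{pq,rs,yz}=x'_{pq}x''_{rs}x'''_{yz}$ (extended linearly).
   Context: $\Bbbk$ field of characteristic $0$, $\otimes=\otimes_\Bbbk$, $(e_s)$ complete orthogonal idempotents. $R$ is the commutative $\Bbbk$-algebra generated by $a_{ij}$ ($a\in A$, $1\le i,j\le N$) with $(a+b)_{ij}=a_{ij}+b_{ij}$, $(ab)_{ij}=\sum_ka_{ik}b_{kj}$, and $(e_s)_{ij}=\delta_{ij}$ if $\alpha_1+\cdots+\alpha_{s-1}<i,j\le\alpha_1+\cdots+\alpha_s$, $0$ otherwise. $D_{A/B}=\operatorname{Der}_B(A,A\otimes A)$ (outer structure $x(d'\otimes d'')y=xd'\otimes d''y$) with bimodule structure $(b\delta c)(a)=\delta(a)'c\otimes b\delta(a)''$; $D_BA=T_AD_{A/B}$. For $\delta\in D_{A/B}$, $\delta_{ij}\in\operatorname{Der}(R)$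 with $\delta_{ij}(b_{kl})=\delta(b)'_{kj}\delta(b)''_{il}$; for $Q=\delta_1\delta_2\delta_3$, $\mathcal X(Q)=\mathcal X(\delta_1)\mathcal X(\delta_2)\mathcal X(\delta_3)$ as matrices with entries in $\bigwedge^3_R\operatorname{Der}(R)$, $\operatorname{tr}\mathcal X(Q)=\sum_i\mathcal X(Q)_{ii}$, extended linearly; $(\xi_1\wedge\xi_2\wedge\xi_3)(f_1,f_2,f_3)=\sum_{\sigma\in S_3}\epsilon(\sigma)\xi_1(f_{\sigma(1)})\xi_2(f_{\sigma(2)})\xi_3(f_{\sigma(3)})$. With $\tau=\tau_{(123)}$, $\tau(x_1\otimes x_2\otimes x_3)=x_3\otimes x_1\otimes x_2$, $\{\!\{-,-,-\}\!\}_Q=\sum_{i=0}^{2}\tau^i\circ\widetilde{\{\!\{\}\!\}}_Q\circ\tau^{-i}$ with $\widetilde{\{\!\{a_1,a_2,a_3\}\!\}}_Q=\delta_3(a_3)'\delta_1(a_1)''\otimes\delta_1(a_1)'\delta_2(a_2)''\otimes\delta_2(a_2)'\delta_3(a_3)''$, extended linearly in $Q$ ($\tau^{-i}$ acting on the argument triple by the same cyclic permutation). *)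

From HB Require Import structures.
From mathcomp Require Import all_boot all_order all_algebra all_fingroup.
Set Implicit Arguments. Unset Strict Implicit. Unset Printing Implicit Defensive.
Import GRing.Theory.
Local Open Scope ring_scope.

(* k-algebras are rings A together with a ring morphism fA : k -> A whose    *)
(* image is central (scalar multiplication c . x := fA c * x).  We use       *)
(* pzRingType so that the zero ring is allowed.                              *)

Section Defs.
Variables (k : fieldType) (A : pzRingType) (fA : {rmorphism k -> A}).

Definition central_image : Prop := forall c x, fA c * x = x * fA c.

Definition complete_orth_idem (K : nat) (e : 'I_K -> A) : Prop :=
  (forall s t, e s * e t = if s == t then e s else 0) /\ \sum_(s < K) e s = 1.

Definition fin_gen_over_B (K : nat) (e : 'I_K -> A) : Prop :=
  exists gens : seq A, forall P : A -> Prop,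
    (forall c, P (fA c)) -> (forall s, P (e s)) -> (forall x, x \in gens -> P x) ->
    (forall x y, P x -> P y -> P (x + y)) -> (forall x y, P x -> P y -> P (x * y)) ->
    forall x, P x.

(* Tensor powers A^{\otimes 2} over k: an element is represented by a finite *)
(* formal sum  sum_i x_i (x) y_i  (a seq of pairs); two formal sums denote   *)
(* the same tensor iff every k-bilinear map takes the same value on them     *)
(* (universal property of the tensor product).                               *)
Definition tens2 := seq (A * A).

Definition bilinear_k (V : lmodType k) (phi : A -> A -> V) : Prop :=
  (forall x1 x2 y, phi (x1 + x2) y = phi x1 y + phi x2 y) /\
  (forall x y1 y2, phi x (y1 + y2) = phi x y1 + phi x y2) /\
  (forall c x y, phi (fA c * x) y = c *: phi x y) /\
  (forall c x y, phi x (fA c * y) = c *: phi x y).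

Definition teq2 (t1 t2 : tens2) : Prop :=
  forall (V : lmodType k) (phi : A -> A -> V), bilinear_k phi ->
    \sum_(p <- t1) phi p.1 p.2 = \sum_(p <- t2) phi p.1 p.2.

(* Double derivations D_{A/B} = Der_B(A, A (x) A) with the outer bimodule    *)
(* structure x (d' (x) d'') y = x d' (x) d'' y; represented by a function    *)
(* choosing a formal-sum representative of delta(a) for each a.              *)
Definition ddertype := A -> tens2.

Definition is_double_der (K : nat) (e : 'I_K -> A) (delta : ddertype) : Prop :=
  (forall x y, teq2 (delta (x + y)) (delta x ++ delta y)) /\
  (forall c x, teq2 (delta (fA c * x)) [seq (fA c * p.1, p.2) | p <- delta x]) /\
  (forall x y, teq2 (delta (x * y))
      ([seq (p.1, p.2 * y) | p <- delta x] ++ [seq (x * p.1, p.2) | p <- delta y])) /\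
  (forall s, teq2 (delta (e s)) [::]).

Variables (K : nat) (e : 'I_K -> A) (alpha : 'I_K -> nat).

Definition dimN : nat := \sum_(s < K) alpha s.

(* block start  alpha_1 + ... + alpha_{s-1}  (0-based indices) *)
Definition blk_start (s : 'I_K) : nat := \sum_(t < K | (t < s)%N) alpha t.

Definition blockE (S : pzRingType) (s : 'I_K) : 'M[S]_dimN :=
  \matrix_(i, j) (if (i == j) && (blk_start s <= i)%N && (i < blk_start s + alpha s)%N
                  then 1 else 0).

(* r : A -> M_N(S) is a k-algebra morphism with e_s |-> blockE s, i.e. the  *)
(* defining relations of O(Rep(A,alpha)) hold for the entries r(a)_{ij}.     *)
Definition is_rep (S : comPzRingType) (fS : {rmorphism k -> S})
    (r : A -> 'M[S]_dimN) : Prop :=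
  (forall x y, r (x + y) = r x + r y) /\
  (forall x y, r (x * y) = r x *m r y) /\
  r 1 = 1%:M /\
  (forall c x, r (fA c * x) = (fS c)%:M *m r x) /\
  (forall s, r (e s) = blockE S s).

(* (R, fR, rho) is the coordinate ring R = O(Rep(A,alpha)) with rho a = (a_ij): *)
(* the universal commutative k-algebra with a representation                 *)
Definition is_coord_ring (R : comPzRingType) (fR : {rmorphism k -> R})
    (rho : A -> 'M[R]_dimN) : Prop :=
  is_rep fR rho /\
  forall (S : comPzRingType) (fS : {rmorphism k -> S}) (r : A -> 'M[S]_dimN),
    is_rep fS r ->
    exists phi : {rmorphism R -> S},
      ((forall c, phi (fR c) = fS c) /\ (forall x i j, phi (rho x i j) = r x i j)) /\
      (forall psi : {rmorphism R -> S},
         (forall c, psi (fR c) = fS c) -> (forall x i j, psi (rho x i j) = r x i j) ->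
         psi =1 phi).

Section Coord.
Variables (R : comPzRingType) (fR : {rmorphism k -> R}) (rho : A -> 'M[R]_dimN).

Definition is_der_R (D : R -> R) : Prop :=
  (forall x y, D (x + y) = D x + D y) /\
  (forall c x, D (fR c * x) = fR c * D x) /\
  (forall x y, D (x * y) = D x * y + x * D y).

Definition is_delta_ij (delta : ddertype) (i j : 'I_dimN) (D : R -> R) : Prop :=
  is_der_R D /\
  forall b (k0 l : 'I_dimN),
    D (rho b k0 l) = \sum_(p <- delta b) rho p.1 k0 j * rho p.2 i l.

Definition wedge3_eval (x1 x2 x3 : R -> R) (f1 f2 f3 : R) : R :=
  let f := fun i : 'I_3 => nth 0 [:: f1; f2; f3] i in
  \sum_(s : 'S_3) (-1) ^+ (odd_perm s) *
     (x1 (f (s (@Ordinal 3 0 isT))) * x2 (f (s (@Ordinal 3 1 isT)))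
       * x3 (f (s (@Ordinal 3 2 isT)))).

(* Q = sum_{t < m} Q1 t Q2 t Q3 t in (D_B A)_3;  dd delta i j = delta_ij.   *)
(* tr X(Q)(f1,f2,f3) where X(Q) = X(d1) X(d2) X(d3), X(d)_{pq} = d_pq, so    *)
(* tr X(Q) = sum_t sum_{p,q,r} (d1_pq /\ d2_qr /\ d3_rp).                    *)
Definition trXQ_eval (m : nat) (Q1 Q2 Q3 : 'I_m -> ddertype)
    (dd : ddertype -> 'I_dimN -> 'I_dimN -> R -> R) (f1 f2 f3 : R) : R :=
  \sum_(t < m) \sum_(p < dimN) \sum_(q < dimN) \sum_(r < dimN)
     wedge3_eval (dd (Q1 t) p q) (dd (Q2 t) q r) (dd (Q3 t) r p) f1 f2 f3.

Definition ev3 (x : seq (A * A * A)) (p q r s y z : 'I_dimN) : R :=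
  \sum_(w <- x) rho w.1.1 p q * rho w.1.2 r s * rho w.2 y z.
End Coord.

Definition tau3 (w : A * A * A) : A * A * A := (w.2, w.1.1, w.1.2).

(* ~{{a1,a2,a3}}_{d1 d2 d3} = d3(a3)'d1(a1)'' (x) d1(a1)'d2(a2)'' (x) d2(a2)'d3(a3)'' *)
Definition tbracket (d1 d2 d3 : ddertype) (a1 a2 a3 : A) : seq (A * A * A) :=
  [seq (z.1 * xy.1.2, xy.1.1 * xy.2.2, xy.2.1 * z.2)
   | xy <- [seq (x, y) | x <- d1 a1, y <- d2 a2], z <- d3 a3].

(* {{a,b,c}}_{d1d2d3} = sum_{i=0}^2 tau^i o ~{{}} o tau^{-i} *)
Definition bracket1 (d1 d2 d3 : ddertype) (a b c : A) : seq (A * A * A) :=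
  tbracket d1 d2 d3 a b c ++ map tau3 (tbracket d1 d2 d3 b c a)
  ++ map (tau3 \o tau3) (tbracket d1 d2 d3 c a b).

Definition bracketQ (m : nat) (Q1 Q2 Q3 : 'I_m -> ddertype) (a b c : A)
  : seq (A * A * A) :=
  flatten [seq bracket1 (Q1 t) (Q2 t) (Q3 t) a b c | t <- enum 'I_m].

End Defs.

From HB Require Import structures.
From mathcomp Require Import all_boot all_order all_algebra all_fingroup.
From mathcomp Require Import ring.

(* Expanding the wedge product as an alternating sum over S_3 writes
   tr X(Q)(a_ij, b_kl, c_uv) as six cyclic traces
   sum_{p,q,r} delta1_pq(f) delta2_qr(g) delta3_rp(h) with (f, g, h) a
   permutation of the three coordinates.  Substituting
   delta_pq(b_kl) = delta(b)'_kq delta(b)''_pl, each sum over p, q, r becomes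
   a product of three matrix products rho(x) rho(y), i.e. a coordinate of
   ~{{x, y, z}}; the three even permutations assemble {{a, b, c}}_Q and the
   three odd ones {{a, c, b}}_Q. *)
Set Implicit Arguments. Unset Strict Implicit. Unset Printing Implicit Defensive.
Import GRing.Theory.
Local Open Scope ring_scope.

Lemma det_mx33 (R : comPzRingType) (g : nat -> nat -> R) :
  \det (\matrix_(i < 3, j < 3) g i j)
  = g 0 0 * g 1 1 * g 2 2 + g 0 1 * g 1 2 * g 2 0 + g 0 2 * g 1 0 * g 2 1
    - g 0 0 * g 1 2 * g 2 1 - g 0 2 * g 1 1 * g 2 0 - g 0 1 * g 1 0 * g 2 2.
Proof.
rewrite (expand_det_row _ ord0) !big_ord_recl big_ord0 /cofactor.
rewrite !(expand_det_row _ ord0) !big_ord_recl !big_ord0 /cofactor.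
rewrite !det_mx11 !mxE /= !expr0 !expr1.
ring.
Qed.

Lemma wedge3_eval_det (R : comPzRingType) (x1 x2 x3 : R -> R) (f1 f2 f3 : R) :
  wedge3_eval x1 x2 x3 f1 f2 f3
  = \det (\matrix_(i < 3, j < 3) nth id [:: x1; x2; x3] i (nth 0 [:: f1; f2; f3] j)).
Proof.
apply: eq_bigr => s _; rewrite !big_ord_recl big_ord0 !mxE mulr1 !mulrA /=.
have -> : lift ord0 (lift ord0 ord0) = Ordinal (isT : (2 < 3)%N) by apply: val_inj.
have -> : lift ord0 ord0 = Ordinal (isT : (1 < 3)%N) by apply: val_inj.
by have -> : ord0 = Ordinal (isT : (0 < 3)%N) by apply: val_inj.
Qed.

Lemma wedge3_evalE (R : comPzRingType) (x1 x2 x3 : R -> R) (f1 f2 f3 : R) :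
  wedge3_eval x1 x2 x3 f1 f2 f3 =
  x1 f1 * x2 f2 * x3 f3 + x1 f2 * x2 f3 * x3 f1 + x1 f3 * x2 f1 * x3 f2
  - x1 f1 * x2 f3 * x3 f2 - x1 f3 * x2 f2 * x3 f1 - x1 f2 * x2 f1 * x3 f3.
Proof.
rewrite wedge3_eval_det.
by rewrite (@det_mx33 _ (fun i j => nth id [:: x1; x2; x3] i (nth 0 [:: f1; f2; f3] j))).
Qed.

Lemma mulr_sum3 (R : pzSemiRingType) (I J L : Type) (r1 : seq I) (r2 : seq J)
    (r3 : seq L) (F : I -> R) (G : J -> R) (H : L -> R) :
  (\sum_(i <- r1) F i) * (\sum_(j <- r2) G j) * (\sum_(l <- r3) H l)
  = \sum_(i <- r1) \sum_(j <- r2) \sum_(l <- r3) F i * G j * H l.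
Proof.
rewrite big_distrlr big_distrl; apply: eq_bigr => i _.
by rewrite big_distrl; apply: eq_bigr => j _; rewrite big_distrr.
Qed.

Lemma exchange_big13 (V : nmodType) (I J1 J2 J3 : Type) (r : seq I)
    (s1 : seq J1) (s2 : seq J2) (s3 : seq J3) (F : I -> J1 -> J2 -> J3 -> V) :
  \sum_(i <- r) \sum_(x <- s1) \sum_(y <- s2) \sum_(z <- s3) F i x y z
  = \sum_(x <- s1) \sum_(y <- s2) \sum_(z <- s3) \sum_(i <- r) F i x y z.
Proof.
rewrite exchange_big; apply: eq_bigr => x _.
by rewrite exchange_big; apply: eq_bigr => y _; rewrite exchange_big.
Qed.

Lemma exchange_big33 (V : nmodType) (I1 I2 I3 J1 J2 J3 : Type) (r1 : seq I1)
    (r2 : seq I2) (r3 : seq I3) (s1 : seq J1) (s2 : seq J2) (s3 : seq J3)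
    (F : I1 -> I2 -> I3 -> J1 -> J2 -> J3 -> V) :
  \sum_(i1 <- r1) \sum_(i2 <- r2) \sum_(i3 <- r3)
    \sum_(x <- s1) \sum_(y <- s2) \sum_(z <- s3) F i1 i2 i3 x y z
  = \sum_(x <- s1) \sum_(y <- s2) \sum_(z <- s3)
    \sum_(i1 <- r1) \sum_(i2 <- r2) \sum_(i3 <- r3) F i1 i2 i3 x y z.
Proof.
under eq_bigr => i1 _ do under eq_bigr => i2 _ do rewrite exchange_big13.
by under eq_bigr => i1 _ do rewrite exchange_big13; rewrite exchange_big13.
Qed.

Section CyclicTrace.
Variables (R : comPzRingType) (N : nat).

Definition cyclic_trace3 (D1 D2 D3 : 'I_N -> 'I_N -> R -> R) (f1 f2 f3 : R) : R :=
  \sum_(p < N) \sum_(q < N) \sum_(r < N) D1 p q f1 * D2 q r f2 * D3 r p f3.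

Lemma sum_wedge3_eval (D1 D2 D3 : 'I_N -> 'I_N -> R -> R) (f1 f2 f3 : R) :
  \sum_(p < N) \sum_(q < N) \sum_(r < N)
     wedge3_eval (D1 p q) (D2 q r) (D3 r p) f1 f2 f3
  = cyclic_trace3 D1 D2 D3 f1 f2 f3 + cyclic_trace3 D1 D2 D3 f2 f3 f1
    + cyclic_trace3 D1 D2 D3 f3 f1 f2 - cyclic_trace3 D1 D2 D3 f1 f3 f2
    - cyclic_trace3 D1 D2 D3 f3 f2 f1 - cyclic_trace3 D1 D2 D3 f2 f1 f3.
Proof.
under eq_bigr => p _ do under eq_bigr => q _ do
  under eq_bigr => r _ do rewrite wedge3_evalE.
under eq_bigr => p _ do under eq_bigr => q _ do rewrite !(sumrB, big_split).
under eq_bigr => p _ do rewrite !(sumrB, big_split).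
by rewrite !(sumrB, big_split).
Qed.

End CyclicTrace.

Section Coordinates.
Variables (A : pzRingType) (K : nat) (alpha : 'I_K -> nat) (R : comPzRingType).
Variable rho : A -> 'M[R]_(dimN alpha).

Definition delta_on_coords (delta : ddertype A)
    (D : 'I_(dimN alpha) -> 'I_(dimN alpha) -> R -> R) : Prop :=
  forall i j b k l, D i j (rho b k l) = \sum_(w <- delta b) rho w.1 k j * rho w.2 i l.

Lemma ev3_cat ws1 ws2 p q r s y z :
  ev3 rho (ws1 ++ ws2) p q r s y z = ev3 rho ws1 p q r s y z + ev3 rho ws2 p q r s y z.
Proof. by rewrite /ev3 big_cat. Qed.

Lemma ev3_map_tau3 ws p q r s y z :
  ev3 rho (map (@tau3 A) ws) p q r s y z = ev3 rho ws r s y z p q.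
Proof. by rewrite /ev3 big_map; apply: eq_bigr => w _ /=; ring. Qed.

Lemma ev3_bracketQ m (Q1 Q2 Q3 : 'I_m -> ddertype A) a b c p q r s y z :
  ev3 rho (bracketQ Q1 Q2 Q3 a b c) p q r s y z
  = \sum_(t < m) ev3 rho (bracket1 (Q1 t) (Q2 t) (Q3 t) a b c) p q r s y z.
Proof. by rewrite /bracketQ {1}/ev3 big_flatten big_map big_enum. Qed.

Hypothesis rho_mul : forall x y, rho (x * y) = rho x *m rho y.

Lemma cyclic_trace3_tbracket d1 d2 d3 D1 D2 D3 :
  delta_on_coords d1 D1 -> delta_on_coords d2 D2 -> delta_on_coords d3 D3 ->
  forall x y z i j k l u v,
  cyclic_trace3 D1 D2 D3 (rho x i j) (rho y k l) (rho z u v)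
  = ev3 rho (tbracket d1 d2 d3 x y z) u j i l k v.
Proof.
move=> hD1 hD2 hD3 x y z i j k l u v.
rewrite /cyclic_trace3 /ev3 /tbracket !big_allpairs_dep /=.
under eq_bigr => p _ do under eq_bigr => q _ do under eq_bigr => r _ do
  rewrite hD1 hD2 hD3 mulr_sum3.
rewrite exchange_big33.
apply: eq_bigr => X _; apply: eq_bigr => Y _; apply: eq_bigr => Z _.
rewrite !rho_mul !mxE mulr_sum3.
apply: eq_bigr => p _; apply: eq_bigr => q _; apply: eq_bigr => r _.
ring.
Qed.

End Coordinates.

Theorem lemma5p3
  (k : fieldType) (hchar : [pchar k] =i pred0)
  (A : pzRingType) (fA : {rmorphism k -> A}) (hcent : central_image fA)
  (K : nat) (e : 'I_K -> A) (he : complete_orth_idem e)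
  (hfg : fin_gen_over_B fA e)
  (alpha : 'I_K -> nat)
  (R : comPzRingType) (fR : {rmorphism k -> R}) (rho : A -> 'M[R]_(dimN alpha))
  (hR : is_coord_ring fA e fR rho)
  (dd : ddertype A -> 'I_(dimN alpha) -> 'I_(dimN alpha) -> R -> R)
  (hdd : forall delta, is_double_der fA e delta ->
           forall i j, is_delta_ij fR rho delta i j (dd delta i j))
  (m : nat) (Q1 Q2 Q3 : 'I_m -> ddertype A)
  (hQ : forall t, [/\ is_double_der fA e (Q1 t), is_double_der fA e (Q2 t)
                    & is_double_der fA e (Q3 t)])
  (a b c : A) (i j k0 l u v : 'I_(dimN alpha)) :
  trXQ_eval Q1 Q2 Q3 dd (rho a i j) (rho b k0 l) (rho c u v)
  = ev3 rho (bracketQ Q1 Q2 Q3 a b c) u j i l k0 v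
    - ev3 rho (bracketQ Q1 Q2 Q3 a c b) k0 j i v u l.
Proof.
have [[_ [rho_mul _]] _] := hR.
have dd_coords delta : is_double_der fA e delta -> delta_on_coords rho delta (dd delta).
  by move=> /hdd hdelta p q; case: (hdelta p q).
rewrite !ev3_bracketQ -sumrB; apply: eq_bigr => t _.
have [/dd_coords h1 /dd_coords h2 /dd_coords h3] := hQ t.
rewrite sum_wedge3_eval !(cyclic_trace3_tbracket rho_mul h1 h2 h3).
rewrite /bracket1 !ev3_cat !map_comp !ev3_map_tau3.
ring.
Qed.
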